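(* Let $\mathcal{X},\mathcal{Y}$ be stationary finite Markov chains, $C:{\bm X}\times{\bm Y}\to\mathbb{R}_+$ a cost function, and $p$ a probability distribution on $\mathbb{N}$ with $p(t)>0$ for all $t\in\mathbb{N}$. Then $d_{\mathrm{OTC}}(\mathcal{X},\mathcal{Y};C)=0$ if and only if $d^{p}_{\mathrm{OTM}}(\mathcal{X},\mathcal{Y};C)=0$.
   Context: A finite Markov chain $\mathcal{X}=({\bm X},m^{\bm X}_\bullet,\nu^{\bm X})$ consists of a finite set ${\bm X}$, a transition kernel $m^{\bm X}_\bullet:{\bm X}\to\mathcal{P}({\bm X})$ and an initial distribution $\nu^{\bm X}$; it is stationary if $\nu^{\bm X}$ is stationary for $m^{\bm X}_\bullet$. $\mathcal{C}(\alpha,\beta)$ denotes the set of couplings of $\alpha,\beta$. A Markovian coupling between $\mathcal{X}$ and $\mathcal{Y}$ is a (possibly time-inhomogeneous) Markov chain $(X_t,Y_t)_{t\in\mathbb{N}}$ on ${\bm X}\times{\bm Y}$ with $\mathrm{law}(X_0,Y_0)\in\mathcal{C}(\nu^{\bm X},\nu^{\bm Y})$ and, for all $t,x,y$, the conditional law of $(X_{t+1},Y_{t+1})$ given $(X_t,Y_t)=(x,y)$ in $\mathcal{C}(m^{\bm X}_x,m^{\bm Y}_y)$; it is time homogeneous if these conditional laws do not depend on $t$. For $p\in\mathcal{P}(\mathbb{N})$ and $T\sim p$, $d^{p}_{\mathrm{OTM}}(\mathcal{X},\mathcal{Y};C)=\inf\mathbb{E}\,C(X_T,Y_T)$ over all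 Markovian couplings independent of $T$. $d_{\mathrm{OTC}}(\mathcal{X},\mathcal{Y};C)=\inf\mathbb{E}\,C(X_0,Y_0)$ over all time homogeneous Markovian couplings whose initial distribution is stationary for the coupled chain. *)

From HB Require Import structures.
From mathcomp Require Import all_boot all_order all_algebra.
From mathcomp Require Import all_classical all_reals all_analysis.
Set Implicit Arguments. Unset Strict Implicit. Unset Printing Implicit Defensive.
Import Order.TTheory GRing.Theory Num.Theory.
Local Open Scope ring_scope.
Local Open Scope classical_set_scope.

Section Defs.
Variable R : realType.

Definition is_dist (T : finType) (mu : T -> R) : Prop :=
  (forall x, 0 <= mu x) /\ \sum_x mu x = 1.

Definition is_kernel (T : finType) (m : T -> T -> R) : Prop :=
  forall x, is_dist (m x).

Definition markov_chain (T : finType) (m : T -> T -> R) (nu : T -> R) : Prop :=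
  is_kernel m /\ is_dist nu.

Definition is_stationary (T : finType) (m : T -> T -> R) (nu : T -> R) : Prop :=
  forall y, \sum_x nu x * m x y = nu y.

Definition is_coupling (X Y : finType) (alpha : X -> R) (beta : Y -> R)
  (g : X * Y -> R) : Prop :=
  is_dist g /\
  (forall x, \sum_y g (x, y) = alpha x) /\
  (forall y, \sum_x g (x, y) = beta y).

(* a (possibly time-inhomogeneous) Markovian coupling, described by its
   initial law g0 and its time-t transition kernels K t *)
Definition markovian_coupling (X Y : finType)
  (mX : X -> X -> R) (nuX : X -> R) (mY : Y -> Y -> R) (nuY : Y -> R)
  (g0 : X * Y -> R) (K : nat -> X * Y -> X * Y -> R) : Prop :=
  is_coupling nuX nuY g0 /\
  forall t x y, is_coupling (mX x) (mY y) (K t (x, y)).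

Fixpoint coupling_law (X Y : finType) (g0 : X * Y -> R)
  (K : nat -> X * Y -> X * Y -> R) (t : nat) : X * Y -> R :=
  match t with
  | 0 => g0
  | t'.+1 => fun z => \sum_w coupling_law g0 K t' w * K t' w z
  end.

(* E C(X_T, Y_T), T ~ p independent of the coupling (extended-real series) *)
Definition otm_cost (X Y : finType) (C : X -> Y -> R) (p : nat -> R)
  (g0 : X * Y -> R) (K : nat -> X * Y -> X * Y -> R) : \bar R :=
  (\sum_(0 <= t <oo) (p t * \sum_z coupling_law g0 K t z * C z.1 z.2)%:E)%E.

Definition d_OTM (X Y : finType)
  (mX : X -> X -> R) (nuX : X -> R) (mY : Y -> Y -> R) (nuY : Y -> R)
  (C : X -> Y -> R) (p : nat -> R) : \bar R :=
  ereal_inf [set c | exists g0 K, markovian_coupling mX nuX mY nuY g0 K /\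
                                  c = otm_cost C p g0 K].

Definition d_OTC (X Y : finType)
  (mX : X -> X -> R) (nuX : X -> R) (mY : Y -> Y -> R) (nuY : Y -> R)
  (C : X -> Y -> R) : \bar R :=
  ereal_inf [set c | exists (g0 : X * Y -> R) (K : X * Y -> X * Y -> R),
     markovian_coupling mX nuX mY nuY g0 (fun _ => K) /\
     is_stationary K g0 /\
     c = ((\sum_z g0 z * C z.1 z.2)%:E)%E].

End Defs.

(* If d_OTC = 0: a stationary time-homogeneous coupling has a constant law, so
   its OTM cost equals its OTC cost, whence d_OTM <= d_OTC.
   If d_OTM = 0: as every p t is positive, a coupling of small OTM cost has small
   expected cost at each time t < N.  The average over t < N of the laws of
   (Z_t, Z_(t+1)) is a law pi on pairs of states whose conditional law given the
   first state couples the transition kernels, whose first marginal couples nuX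
   and nuY, whose cost is small and whose two marginals differ by at most 2/N
   (telescoping).  A continuous defect measuring the failure of these conditions
   thus takes arbitrarily small values on the compact cube [0,1]^((X*Y)^2), hence
   vanishes at a minimiser; conditioning that minimiser on its first coordinate
   gives a stationary time-homogeneous coupling of cost 0. *)

From HB Require Import structures.
From mathcomp Require Import all_boot all_order all_algebra.
From mathcomp Require Import all_classical all_reals all_analysis lra.
Set Implicit Arguments. Unset Strict Implicit. Unset Printing Implicit Defensive.
Import Order.TTheory GRing.Theory Num.Theory numFieldNormedType.Exports.
Local Open Scope ring_scope.
Local Open Scope classical_set_scope.

Section Couplings.
Variable R : realType.

Definition marg1 (A B : finType) (g : A * B -> R) (a : A) : R := \sum_b g (a, b).
Definition marg2 (A B : finType) (g : A * B -> R) (b : B) : R := \sum_a g (a, b).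

Lemma sum_marg1 (A B : finType) (g : A * B -> R) :
  \sum_a marg1 g a = \sum_w g w.
Proof. by rewrite pair_bigA; apply: eq_bigr => -[]. Qed.

Lemma dist_le1 (T : finType) (mu : T -> R) x : is_dist mu -> mu x <= 1.
Proof. by move=> [mu0 <-]; rewrite (bigD1 x) //= lerDl sumr_ge0. Qed.

Lemma product_coupling (A B : finType) (alpha : A -> R) (beta : B -> R) :
  is_dist alpha -> is_dist beta ->
  is_coupling alpha beta (fun w => alpha w.1 * beta w.2).
Proof.
move=> [a0 a1] [b0 b1]; split; [split|split] => [w|||].
- exact: mulr_ge0.
- rewrite -(sum_marg1 (fun w => alpha w.1 * beta w.2)) -[RHS]a1.
  by apply: eq_bigr => a _; rewrite -[RHS]mulr1 -b1 mulr_sumr.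
- by move=> a; rewrite -[RHS]mulr1 -b1 mulr_sumr.
- by move=> b; rewrite -[RHS]mul1r -a1 mulr_suml.
Qed.

Lemma normalized_coupling (A B : finType) (alpha : A -> R) (beta : B -> R)
    (g : A * B -> R) (c : R) :
  0 < c -> (forall w, 0 <= g w) -> is_dist alpha ->
  (forall a, marg1 g a = c * alpha a) -> (forall b, marg2 g b = c * beta b) ->
  is_coupling alpha beta (fun w => g w / c).
Proof.
move=> c0 g0 [_ a1] g1 g2; have c_neq0 : c != 0 by rewrite gt_eqF.
split; [split|split] => [w|||].
- by rewrite divr_ge0 // ltW.
- rewrite -mulr_suml -sum_marg1; under eq_bigr do rewrite g1.
  by rewrite -mulr_sumr a1 mulr1 divff.
- by move=> a; rewrite -mulr_suml -/(marg1 g a) g1 mulrC mulKf.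
- by move=> b; rewrite -mulr_suml -/(marg2 g b) g2 mulrC mulKf.
Qed.

Lemma le_marg1 (A B : finType) (g : A * B -> R) a b :
  (forall w, 0 <= g w) -> g (a, b) <= marg1 g a.
Proof. by move=> g_ge0; rewrite /marg1 (bigD1 b) //= lerDl sumr_ge0. Qed.

Lemma sum_mulr_fst (A B : finType) (g : A * B -> R) (f : A -> R) :
  \sum_w g w * f w.1 = \sum_a marg1 g a * f a.
Proof.
rewrite /marg1; under [RHS]eq_bigr do rewrite mulr_suml.
by rewrite pair_bigA; apply: eq_bigr => -[].
Qed.

Lemma sum_mulr_snd (A B : finType) (g : A * B -> R) (f : B -> R) :
  \sum_w g w * f w.2 = \sum_b marg2 g b * f b.
Proof.
rewrite /marg2; under [RHS]eq_bigr do rewrite mulr_suml.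
by rewrite exchange_big pair_bigA; apply: eq_bigr => -[].
Qed.

Lemma marg1_mix (A B W : finType) (h : W -> R) (G : W -> A * B -> R) a :
  marg1 (fun z => \sum_w h w * G w z) a = \sum_w h w * marg1 (G w) a.
Proof. by rewrite /marg1 exchange_big; apply: eq_bigr => w _; rewrite mulr_sumr. Qed.

Lemma marg2_mix (A B W : finType) (h : W -> R) (G : W -> A * B -> R) b :
  marg2 (fun z => \sum_w h w * G w z) b = \sum_w h w * marg2 (G w) b.
Proof. by rewrite /marg2 exchange_big; apply: eq_bigr => w _; rewrite mulr_sumr. Qed.

Definition l1dist (A : finType) (f g : A -> R) : R := \sum_a `|f a - g a|.

Lemma l1dist_ge0 (A : finType) (f g : A -> R) : 0 <= l1dist f g.
Proof. exact: sumr_ge0. Qed.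

Lemma l1dist_eq0 (A : finType) (f g : A -> R) : l1dist f g = 0 <-> f =1 g.
Proof.
split=> [/psumr_eq0P fg a | fg]; last by apply: big1 => a _; rewrite fg subrr normr0.
by apply/eqP; rewrite -subr_eq0 -normr_eq0 fg.
Qed.

Definition coupling_defect (A B : finType) (alpha : A -> R) (beta : B -> R)
  (g : A * B -> R) : R := l1dist (marg1 g) alpha + l1dist (marg2 g) beta.

Lemma coupling_defect_ge0 (A B : finType) (alpha : A -> R) (beta : B -> R) g :
  0 <= coupling_defect alpha beta g.
Proof. by rewrite addr_ge0 ?l1dist_ge0. Qed.

Lemma coupling_defect_eq0 (A B : finType) (alpha : A -> R) (beta : B -> R) g :
  coupling_defect alpha beta g = 0 <-> marg1 g =1 alpha /\ marg2 g =1 beta.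
Proof.
rewrite /coupling_defect -!l1dist_eq0; split=> [/eqP | [-> ->]]; last by rewrite addr0.
by rewrite paddr_eq0 ?l1dist_ge0 // => /andP[/eqP-> /eqP->].
Qed.

End Couplings.

Section MarkovianCouplingLaw.
Variables (R : realType) (X Y : finType).
Variables (mX : X -> X -> R) (nuX : X -> R) (mY : Y -> Y -> R) (nuY : Y -> R).
Variables (g0 : X * Y -> R) (K : nat -> X * Y -> X * Y -> R).
Hypothesis gK : markovian_coupling mX nuX mY nuY g0 K.

Lemma kernel_coupling t z : is_coupling (mX z.1) (mY z.2) (K t z).
Proof. by case: z => x y; exact: gK.2. Qed.

Lemma coupling_law_dist t : is_dist (coupling_law g0 K t).
Proof.
elim: t => [|t [L0 L1]]; first exact: gK.1.1.
split => [z|] /=.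
  by apply: sumr_ge0 => w _; rewrite mulr_ge0 //; case: (kernel_coupling t w) => -[].
rewrite exchange_big /= -[RHS]L1; apply: eq_bigr => w _.
by rewrite -mulr_sumr (kernel_coupling t w).1.2 mulr1.
Qed.

Lemma coupling_law_marg1 t : is_stationary mX nuX ->
  marg1 (coupling_law g0 K t) =1 nuX.
Proof.
move=> sX; elim: t => [|t IH] x; first exact: gK.1.2.1.
rewrite /= marg1_mix; under eq_bigr do rewrite [marg1 _ _](kernel_coupling t _).2.1.
by rewrite (sum_mulr_fst _ (mX^~ x)) -[RHS]sX; apply: eq_bigr => a _; rewrite IH.
Qed.

Lemma coupling_law_marg2 t : is_stationary mY nuY ->
  marg2 (coupling_law g0 K t) =1 nuY.
Proof.
move=> sY; elim: t => [|t IH] y; first exact: gK.1.2.2.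
rewrite /= marg2_mix; under eq_bigr do rewrite [marg2 _ _](kernel_coupling t _).2.2.
by rewrite (sum_mulr_snd _ (mY^~ y)) -[RHS]sY; apply: eq_bigr => b _; rewrite IH.
Qed.

End MarkovianCouplingLaw.

Lemma stationary_coupling_law (R : realType) (X Y : finType)
    (g0 : X * Y -> R) (K : X * Y -> X * Y -> R) t :
  is_stationary K g0 -> coupling_law g0 (fun=> K) t = g0.
Proof. by move=> st; elim: t => [|t IH] //=; apply: funext => z; rewrite IH. Qed.

Section Continuity.
Variables (R : realType) (T : topologicalType).

Lemma continuous_addr (f g : T -> R) :
  continuous f -> continuous g -> continuous (fun v => f v + g v).
Proof. by move=> fc gc v; apply: continuousD (fc v) (gc v). Qed.

Lemma continuous_sumr (I : finType) (F : I -> T -> R) :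
  (forall i, continuous (F i)) -> continuous (fun v => \sum_i F i v).
Proof. by move=> Fc; apply: continuous_big => //; exact: add_continuous. Qed.

Lemma continuous_marg1 (A B : finType) (g : T -> A * B -> R) :
  (forall w, continuous (g^~ w)) -> forall a, continuous (fun v => marg1 (g v) a).
Proof. by move=> gc a; apply: continuous_sumr => b; exact: gc. Qed.

Lemma continuous_marg2 (A B : finType) (g : T -> A * B -> R) :
  (forall w, continuous (g^~ w)) -> forall b, continuous (fun v => marg2 (g v) b).
Proof. by move=> gc b; apply: continuous_sumr => a; exact: gc. Qed.

Lemma continuous_l1dist (A : finType) (f g : T -> A -> R) :
  (forall a, continuous (f^~ a)) -> (forall a, continuous (g^~ a)) ->
  continuous (fun v => l1dist (f v) (g v)).
Proof.
move=> fc gc; apply: continuous_sumr => a v.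
by apply: (continuous_comp (continuousB (fc a v) (gc a v))); exact: norm_continuous.
Qed.

Lemma continuous_coupling_defect (A B : finType)
    (alpha : T -> A -> R) (beta : T -> B -> R) (g : T -> A * B -> R) :
  (forall a, continuous (alpha^~ a)) -> (forall b, continuous (beta^~ b)) ->
  (forall w, continuous (g^~ w)) ->
  continuous (fun v => coupling_defect (alpha v) (beta v) (g v)).
Proof.
move=> alpha_c beta_c gc v; apply: continuousD.
  by apply: continuous_l1dist => //; exact: continuous_marg1.
by apply: continuous_l1dist => //; exact: continuous_marg2.
Qed.

End Continuity.

Section UnitBox.
Variables (R : realType) (T : finType).

Definition of_rV (v : 'rV[R]_#|T|) (t : T) : R := v ord0 (enum_rank t).

Lemma continuous_of_rV t : continuous (fun v => of_rV v t).
Proof. exact: coord_continuous. Qed.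

Lemma unit_box_le0 (F : (T -> R) -> R) :
  continuous (fun v => F (of_rV v)) ->
  (forall eta, 0 < eta -> exists2 f, (forall t, 0 <= f t <= 1) & F f <= eta) ->
  exists2 f, (forall t, 0 <= f t <= 1) & F f <= 0.
Proof.
move=> Fc F_small.
pose box := [set v : 'rV[R]_#|T| | forall i, `[0, 1] (v ord0 i)].
have box_compact : compact box := rV_compact (fun=> @segment_compact R 0 1).
have box0 : box !=set0 by exists 0 => i; rewrite /= mxE in_itv /= lexx ler01.
have [v /set_mem v_box v_min] :=
  compact_EVT_min box0 box_compact (continuous_subspaceT Fc).
exists (of_rV v) => [t|]; first by have := v_box (enum_rank t); rewrite /= in_itv.
apply/ler_addgt0Pr => eta /F_small[f f01 Ff]; rewrite add0r; apply: le_trans Ff.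
have -> : f = of_rV (\row_i f (enum_val i)).
  by apply: funext => t; rewrite /of_rV mxE enum_rankK.
by apply/v_min/mem_set => i; rewrite /= mxE in_itv /=; exact: f01.
Qed.

End UnitBox.

Section Costs.
Variables (R : realType) (X Y : finType).
Variables (mX : X -> X -> R) (nuX : X -> R) (mY : Y -> Y -> R) (nuY : Y -> R).
Variables (C : X -> Y -> R) (p : nat -> R).
Hypothesis C_ge0 : forall x y, 0 <= C x y.

Definition expected_cost (g : X * Y -> R) : R := \sum_z g z * C z.1 z.2.

Lemma expected_cost_ge0 g : (forall z, 0 <= g z) -> 0 <= expected_cost g.
Proof. by move=> g0; apply: sumr_ge0 => z _; rewrite mulr_ge0. Qed.

Lemma d_OTC_ge0 : (0 <= d_OTC mX nuX mY nuY C)%E.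
Proof.
apply: le_ereal_inf_tmp => _ [g0 [K [[[[g0_ge0 _] _] _] [_ ->]]]].
by rewrite lee_fin expected_cost_ge0.
Qed.

Section OTMCost.
Hypothesis p_ge0 : forall t, 0 <= p t.

Lemma otm_cost_term_ge0 g0 K t : markovian_coupling mX nuX mY nuY g0 K ->
  (0 <= (p t * expected_cost (coupling_law g0 K t))%:E)%E.
Proof.
move=> gK; rewrite lee_fin mulr_ge0 // expected_cost_ge0 //.
by case: (coupling_law_dist gK t).
Qed.

Lemma otm_cost_ge0 g0 K : markovian_coupling mX nuX mY nuY g0 K ->
  (0 <= otm_cost C p g0 K)%E.
Proof. by move=> gK; apply: nneseries_ge0 => t _ _; exact: otm_cost_term_ge0. Qed.

Lemma d_OTM_ge0 : (0 <= d_OTM mX nuX mY nuY C p)%E.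
Proof. by apply: le_ereal_inf_tmp => _ [g0 [K [gK ->]]]; exact: otm_cost_ge0. Qed.

Lemma expected_cost_le_otm_cost g0 K t : markovian_coupling mX nuX mY nuY g0 K ->
  ((p t * expected_cost (coupling_law g0 K t))%:E <= otm_cost C p g0 K)%E.
Proof.
move=> gK; have term_ge0 s := otm_cost_term_ge0 s gK.
apply: le_trans (nneseries_lim_ge t.+1 (fun s _ _ => term_ge0 s)).
by rewrite big_nat_recr //= leeDr // sume_ge0.
Qed.

Lemma d_OTM_le_d_OTC : (\sum_(0 <= t <oo) (p t)%:E)%E = 1%E ->
  (d_OTM mX nuX mY nuY C p <= d_OTC mX nuX mY nuY C)%E.
Proof.
move=> p1; apply: ereal_inf_le_tmp => _ [g0 [K [gK [st ->]]]].
exists g0, (fun=> K); split => //; rewrite /otm_cost.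
under eq_eseriesr do rewrite stationary_coupling_law // EFinM muleC.
rewrite nneseriesZl ?p1 ?mule1 // => t _.
by rewrite lee_fin.
Qed.

End OTMCost.

Lemma expected_costs_small_of_d_OTM_eq0 N delta :
  (forall t, 0 < p t) -> d_OTM mX nuX mY nuY C p = 0%E -> 0 < delta ->
  exists g0 K, markovian_coupling mX nuX mY nuY g0 K /\
    \sum_(t < N) expected_cost (coupling_law g0 K t) <= delta.
Proof.
move=> p_gt0 otm0 delta_gt0.
pose c := \sum_(t < N) (p t)^-1.
have c_ge0 : 0 <= c by apply: sumr_ge0 => t _; rewrite invr_ge0 ltW.
pose eps := delta / (c + 1).
have eps_gt0 : 0 < eps by rewrite divr_gt0 // ltr_wpDl.
have : (d_OTM mX nuX mY nuY C p < eps%:E)%E by rewrite otm0 lte_fin.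
case/ereal_inf_lt => _ [g0 [K [gK ->]]] cost_lt; exists g0, K; split => //.
apply: le_trans (_ : c * eps <= delta); last first.
  by rewrite /eps mulrCA ler_piMr ?ltW // ltr_pdivrMr ?ltr_wpDl // mul1r ltrDl.
rewrite mulr_suml; apply: ler_sum => t _.
rewrite ler_pdivlMl // -lee_fin.
exact/ltW/(le_lt_trans (expected_cost_le_otm_cost (fun s => ltW (p_gt0 s)) t gK)).
Qed.

End Costs.

Section Defect.
Variables (R : realType) (X Y : finType).
Variables (mX : X -> X -> R) (nuX : X -> R) (mY : Y -> Y -> R) (nuY : Y -> R).
Variable C : X -> Y -> R.

Definition kernel_defect (pi : (X * Y) * (X * Y) -> R) : R :=
  \sum_z coupling_defect (fun x => marg1 pi z * mX z.1 x)
                         (fun y => marg1 pi z * mY z.2 y) (fun w => pi (z, w)).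

Lemma kernel_defect_ge0 pi : 0 <= kernel_defect pi.
Proof. by apply: sumr_ge0 => z _; exact: coupling_defect_ge0. Qed.

(* For nonnegative pi, [defect pi] vanishes exactly when pi is the law of
   (Z_0, Z_1) for a stationary time-homogeneous Markovian coupling of cost 0. *)
Definition defect (pi : (X * Y) * (X * Y) -> R) : R :=
  kernel_defect pi + coupling_defect nuX nuY (marg1 pi)
  + l1dist (marg2 pi) (marg1 pi)
  + expected_cost C (marg1 pi).

Section AveragedTransitionLaw.
Variables (g0 : X * Y -> R) (K : nat -> X * Y -> X * Y -> R).
Hypothesis gK : markovian_coupling mX nuX mY nuY g0 K.
Variable N : nat.
Hypothesis N_gt0 : (0 < N)%N.

Local Notation L := (coupling_law g0 K).

Definition avg_transition_law : (X * Y) * (X * Y) -> R :=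
  fun zw => \sum_(t < N) N%:R^-1 * L t zw.1 * K t zw.1 zw.2.

Definition avg_law (z : X * Y) : R := \sum_(t < N) N%:R^-1 * L t z.

Let sum_N_inv (a : R) : \sum_(t < N) N%:R^-1 * a = a.
Proof.
by rewrite sumr_const card_ord -[_ *+ N]mulr_natl mulrA mulfV ?mul1r // pnatr_eq0 -lt0n.
Qed.

Lemma marg1_avg_transition_law : marg1 avg_transition_law =1 avg_law.
Proof.
move=> z; rewrite /marg1 exchange_big; apply: eq_bigr => t _.
by rewrite -[RHS]mulr1 -(kernel_coupling gK t z).1.2 mulr_sumr.
Qed.

Lemma marg2_avg_transition_law w :
  marg2 avg_transition_law w = \sum_(t < N) N%:R^-1 * L t.+1 w.
Proof.
rewrite /marg2 exchange_big; apply: eq_bigr => t _ /=.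
by rewrite mulr_sumr; apply: eq_bigr => z _; rewrite mulrA.
Qed.

Lemma avg_law_dist : is_dist avg_law.
Proof.
split=> [z|].
  by apply: sumr_ge0 => t _; rewrite mulr_ge0 //; case: (coupling_law_dist gK t).
rewrite exchange_big -[RHS](sum_N_inv 1); apply: eq_bigr => t _.
by rewrite -mulr_sumr (coupling_law_dist gK t).2.
Qed.

Lemma avg_transition_law_dist : is_dist avg_transition_law.
Proof.
split=> [zw|].
  apply: sumr_ge0 => t _; rewrite !mulr_ge0 //; first by case: (coupling_law_dist gK t).
  by case: (kernel_coupling gK t zw.1) => -[].
rewrite -sum_marg1 -avg_law_dist.2.
by apply: eq_bigr => z _; rewrite marg1_avg_transition_law.
Qed.

Lemma avg_law_marg1 : is_stationary mX nuX -> marg1 avg_law =1 nuX.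
Proof.
move=> sX x; rewrite (marg1_mix (fun=> N%:R^-1) (fun t : 'I_N => L t)).
by under eq_bigr do rewrite (coupling_law_marg1 gK) //; rewrite sum_N_inv.
Qed.

Lemma avg_law_marg2 : is_stationary mY nuY -> marg2 avg_law =1 nuY.
Proof.
move=> sY y; rewrite (marg2_mix (fun=> N%:R^-1) (fun t : 'I_N => L t)).
by under eq_bigr do rewrite (coupling_law_marg2 gK) //; rewrite sum_N_inv.
Qed.

Lemma avg_transition_law_kernel_marg1 z x :
  marg1 (fun w => avg_transition_law (z, w)) x = avg_law z * mX z.1 x.
Proof.
rewrite (marg1_mix (fun t : 'I_N => N%:R^-1 * L t z) (fun t : 'I_N => K t z)).
rewrite /avg_law mulr_suml; apply: eq_bigr => t _.
by rewrite [marg1 _ _](kernel_coupling gK t z).2.1.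
Qed.

Lemma avg_transition_law_kernel_marg2 z y :
  marg2 (fun w => avg_transition_law (z, w)) y = avg_law z * mY z.2 y.
Proof.
rewrite (marg2_mix (fun t : 'I_N => N%:R^-1 * L t z) (fun t : 'I_N => K t z)).
rewrite /avg_law mulr_suml; apply: eq_bigr => t _.
by rewrite [marg2 _ _](kernel_coupling gK t z).2.2.
Qed.

Lemma l1dist_avg_transition_law :
  l1dist (marg2 avg_transition_law) (marg1 avg_transition_law) <= 2 * N%:R^-1.
Proof.
have telescope w : marg2 avg_transition_law w - marg1 avg_transition_law w =
                   N%:R^-1 * (L N w - L 0 w).
  rewrite marg2_avg_transition_law marg1_avg_transition_law /avg_law -sumrB.
  under eq_bigr do rewrite -mulrBr.
  by rewrite -mulr_sumr -(telescope_sumr (fun t => L t w) (leq0n N)) big_mkord.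
apply: le_trans (_ : \sum_w N%:R^-1 * (L N w + L 0 w) <= _).
  apply: ler_sum => w _; rewrite telescope normrM ger0_norm // ler_wpM2l //.
  have [[LN_ge0 _] [L0_ge0 _]] := (coupling_law_dist gK N, coupling_law_dist gK 0).
  by apply: le_trans (ler_normB _ _) _; rewrite !ger0_norm.
by rewrite -mulr_sumr big_split !(coupling_law_dist gK _).2 mulrC.
Qed.

Lemma expected_cost_avg_law :
  expected_cost C avg_law = \sum_(t < N) N%:R^-1 * expected_cost C (L t).
Proof.
rewrite /expected_cost; under eq_bigr do rewrite mulr_suml.
rewrite exchange_big; apply: eq_bigr => t _; rewrite mulr_sumr.
by apply: eq_bigr => z _; rewrite mulrA.
Qed.

Lemma defect_avg_transition_law :
  is_stationary mX nuX -> is_stationary mY nuY -> (forall x y, 0 <= C x y) ->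
  defect avg_transition_law <= 2 * N%:R^-1 + \sum_(t < N) expected_cost C (L t).
Proof.
move=> sX sY C_ge0; have avgE := funext marg1_avg_transition_law.
rewrite /defect /kernel_defect avgE big1 => [|z _]; last first.
  apply/coupling_defect_eq0; split.
    exact: avg_transition_law_kernel_marg1.
  exact: avg_transition_law_kernel_marg2.
have /coupling_defect_eq0 -> : marg1 avg_law =1 nuX /\ marg2 avg_law =1 nuY.
  by split; [exact: avg_law_marg1 | exact: avg_law_marg2].
rewrite -avgE !add0r lerD ?l1dist_avg_transition_law // avgE expected_cost_avg_law.
apply: ler_sum => t _; rewrite ler_piMl ?invf_le1 ?ler1n ?ltr0n //.
by rewrite expected_cost_ge0 //; case: (coupling_law_dist gK t).
Qed.

End AveragedTransitionLaw.

(* The product coupling on states of zero mass is an arbitrary valid choice. *)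
Definition cond_kernel (pi : (X * Y) * (X * Y) -> R) (z w : X * Y) : R :=
  if marg1 pi z == 0 then mX z.1 w.1 * mY z.2 w.2 else pi (z, w) / marg1 pi z.

Section ConditionalKernel.
Variable pi : (X * Y) * (X * Y) -> R.
Hypothesis pi_ge0 : forall w, 0 <= pi w.

Lemma cond_kernel_coupling z : is_kernel mX -> is_kernel mY ->
  coupling_defect (fun x => marg1 pi z * mX z.1 x) (fun y => marg1 pi z * mY z.2 y)
                  (fun w => pi (z, w)) = 0 ->
  is_coupling (mX z.1) (mY z.2) (cond_kernel pi z).
Proof.
move=> mXk mYk /coupling_defect_eq0[pi_mX pi_mY]; rewrite /cond_kernel.
have [_|mu_neq0] := eqVneq (marg1 pi z) 0; first exact: product_coupling.
apply: normalized_coupling => //; rewrite lt_def mu_neq0 /=; exact: sumr_ge0.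
Qed.

Lemma cond_kernel_stationary : marg2 pi =1 marg1 pi ->
  is_stationary (cond_kernel pi) (marg1 pi).
Proof.
move=> pi_stat w; rewrite -pi_stat; apply: eq_bigr => z _; rewrite /cond_kernel.
have [mu0|mu_neq0] := eqVneq (marg1 pi z) 0; last by rewrite mulrC divfK.
by rewrite mu0 mul0r; apply/esym/le_anti; rewrite pi_ge0 -mu0 le_marg1.
Qed.

Lemma d_OTC_le0_of_defect : markov_chain mX nuX -> markov_chain mY nuY ->
  (forall x y, 0 <= C x y) -> defect pi <= 0 -> (d_OTC mX nuX mY nuY C <= 0)%E.
Proof.
move=> [mXk nuXd] [mYk nuYd] C_ge0 defect_le0.
have mu_ge0 z : 0 <= marg1 pi z by exact: sumr_ge0.
have [kernel0 marg0 stat0 cost0] :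
    [/\ kernel_defect pi = 0, coupling_defect nuX nuY (marg1 pi) = 0,
        l1dist (marg2 pi) (marg1 pi) = 0 & expected_cost C (marg1 pi) = 0].
  move: defect_le0 (kernel_defect_ge0 pi) (coupling_defect_ge0 nuX nuY (marg1 pi)).
  move: (l1dist_ge0 (marg2 pi) (marg1 pi)) (expected_cost_ge0 C_ge0 mu_ge0).
  by rewrite /defect => *; split; lra.
have [mu_nuX mu_nuY] := (coupling_defect_eq0 _ _ _).1 marg0.
apply: ereal_inf_lbound; exists (marg1 pi), (cond_kernel pi); split; last split.
- split=> [|_ x y].
    split=> //; split=> //; rewrite -sum_marg1 -nuXd.2; exact: eq_bigr.
  apply: cond_kernel_coupling => //.
  by move/psumr_eq0P: kernel0; apply=> // z _; exact: coupling_defect_ge0.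
- exact/cond_kernel_stationary/l1dist_eq0.
- by rewrite -[RHS]/((expected_cost C (marg1 pi))%:E) cost0.
Qed.

End ConditionalKernel.

Lemma continuous_defect (T : topologicalType) (pi : T -> (X * Y) * (X * Y) -> R) :
  (forall w, continuous (pi^~ w)) -> continuous (fun v => defect (pi v)).
Proof.
move=> pi_c; have mu_c := continuous_marg1 pi_c.
have muM_c z (c : R) : continuous (fun v => marg1 (pi v) z * c).
  by move=> v; apply: continuousM (mu_c z v) (@cst_continuous _ _ c v).
apply: continuous_addr; [apply: continuous_addr; [apply: continuous_addr|]|].
- apply: continuous_sumr => z.
  by apply: continuous_coupling_defect => [x|y|w];
    [exact: muM_c|exact: muM_c|exact: pi_c].
- by apply: continuous_coupling_defect => [x|y|z];
    [exact: cst_continuous|exact: cst_continuous|exact: mu_c].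
- exact: continuous_l1dist (continuous_marg2 pi_c) mu_c.
- by apply: continuous_sumr => z; exact: muM_c.
Qed.

Lemma defect_small_of_d_OTM_eq0 (p : nat -> R) :
  is_stationary mX nuX -> is_stationary mY nuY -> (forall x y, 0 <= C x y) ->
  (forall t, 0 < p t) -> d_OTM mX nuX mY nuY C p = 0%E ->
  forall eta, 0 < eta -> exists2 pi, (forall w, 0 <= pi w <= 1) & defect pi <= eta.
Proof.
move=> sX sY C_ge0 p_gt0 otm0 eta eta_gt0.
pose N := (Num.truncn (4 / eta)).+1; have N_gt0 : (0 < N)%N by [].
have [g0 [K [gK costs_small]]] :=
  expected_costs_small_of_d_OTM_eq0 C_ge0 N p_gt0 otm0 (divr_gt0 eta_gt0 (ltr0Sn R 1)).
have avg_dist := avg_transition_law_dist gK N_gt0.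
exists (avg_transition_law g0 K N) => [w|]; first by rewrite avg_dist.1 dist_le1.
apply: le_trans (defect_avg_transition_law gK N_gt0 sX sY C_ge0) _.
rewrite [leRHS]splitr lerD // ler_pdivrMr ?ltr0n // mulrAC ler_pdivlMr //.
by have := truncnS_gt (4 / eta); rewrite ltr_pdivrMr // mulrC -/N => /ltW; lra.
Qed.

End Defect.

Theorem proposition8 (R : realType) (X Y : finType)
  (mX : X -> X -> R) (nuX : X -> R) (mY : Y -> Y -> R) (nuY : Y -> R)
  (C : X -> Y -> R) (p : nat -> R) :
  markov_chain mX nuX -> is_stationary mX nuX ->
  markov_chain mY nuY -> is_stationary mY nuY ->
  (forall x y, 0 <= C x y) ->
  (forall t, 0 < p t) ->
  (\sum_(0 <= t <oo) (p t)%:E)%E = 1%E ->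
  (d_OTC mX nuX mY nuY C = 0%E <-> d_OTM mX nuX mY nuY C p = 0%E).
Proof.
move=> hX sX hY sY C_ge0 p_gt0 p_sum1; have p_ge0 t := ltW (p_gt0 t).
split=> [otc0 | otm0]; apply/eqP; rewrite eq_le.
  by rewrite d_OTM_ge0 // andbT -otc0 d_OTM_le_d_OTC.
rewrite d_OTC_ge0 // andbT.
have [pi pi01 defect_le0] := unit_box_le0
  (continuous_defect (@continuous_of_rV R _))
  (defect_small_of_d_OTM_eq0 sX sY C_ge0 p_gt0 otm0).
by apply: (d_OTC_le0_of_defect (pi := pi)) => // w; case/andP: (pi01 w).
Qed.
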